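(* Let $G\in\mathcal{C}$, let $C$ be a proper separator of $G$ with full components $L$ and $R$, let $c_1,c_2\in C$, and let $H$ be a $(C,c_1,c_2)$-hole, with $H_L,H_R,\ell_1,\ell_2,r_1,r_2$ as defined below. Suppose $v\in V(G)\setminus V(H)$ has a neighbor in $H_L^*\setminus\{\ell_1,\ell_2\}$ and a neighbor in $H_R^*\setminus\{r_1,r_2\}$. Then $v$ is $(c_1,c_2)$-heavy with respect to $H$.
   Context: All graphs are finite and simple; paths are induced paths; a hole is an induced cycle of length at least four. $\mathcal{C}$ is the class of graphs containing no theta, pyramid, prism or turtle as an induced subgraph (theta: two nonadjacent vertices joined by three otherwise disjoint paths, any two inducing a hole; pyramid: a vertex $a$ joined to the three vertices $b_i$ of a triangle by paths disjoint except at $a$, any two inducing a hole; prism: two disjoint triangles $\{a_i\},\{b_i\}$ joined by disjoint paths $a_i$–$b_i$, any two inducing a hole; turtle: a hole formed by disjoint paths $P_1$ from $a_1$ to $b_1$ and $P_2$ from $a_2$ to $b_2$ with edges $a_1a_2,b_1b_2$, plus adjacent vertices $x,y$, $x$ having $\ge3$ neighbors in $P_1$ and none in $P_2$, $y$ having $\ge3$ neighbors in $P_2$ and none in $P_1$). A minimal separator $C$ of $G$ is a set such that $G\setminus C$ has two distinct components $L,R$ with $N(L)=N(R)=C$; it is proper if it is not a clique, in which case $G\setminus C$ has exactly two components $L,R$ with $N(L)=N(R)=C$ (the full components). For $c_1,c_2\in C$, a $(C,c_1,c_2)$-hole is a hole $H$ with $V(H)\cap C=\{c_1,c_2\}$ whose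 two $c_1$–$c_2$ paths $H_L,H_R$ satisfy $H_L^*\subseteq L$ and $H_R^*\subseteq R$, where $P^*$ denotes the interior (vertices other than the ends) of a path $P$. $\ell_1,\ell_2$ are the neighbors of $c_1,c_2$ in $H_L$, and $r_1,r_2$ are the neighbors of $c_1,c_2$ in $H_R$. For $u\notin V(H)$, $N_H(u)$ is the set of its neighbors in $H$; $u$ is major for $H$ if $N_H(u)\ne\emptyset$ and $N_H(u)$ is not contained in the vertex set of any three-vertex subpath of $H$. A $w$-sector is a subpath $Q=x\text{-}\cdots\text{-}y$ of $H$ with $x,y$ neighbors of $w$ and no interior vertex adjacent to $w$; an extended neighborhood of $w$ in $H$ is $Q\cup(\{x',y'\}\cap N_H(w))$ for a $w$-sector $Q=x\text{-}\cdots\text{-}y$, where $x',y'$ are the neighbors of $x,y$ in $H\setminus V(Q)$; $a,b\in V(H)$ are distant in $H$ with respect to $w$ if no extended neighborhood of $w$ contains both. A vertex $v$ is $(c_1,c_2)$-heavy with respect to $H$ if $v$ is major for $H$ and $c_1,c_2$ are distant in $H$ with respect to $v$. *)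

(* Finite simple graphs as a symmetric irreflexive relation
   e : rel T on a finite type T. *)
From mathcomp Require Import all_boot.
Set Implicit Arguments.
Unset Strict Implicit.
Unset Printing Implicit Defensive.

Section Graphs.
Variable T : finType.
Variable e : rel T.

Definition ipath (x : T) (p : seq T) : Prop :=
  let s := x :: p in
  uniq s /\
  forall i j, i < size s -> j < size s ->
    e (nth x s i) (nth x s j) = (i == j.+1) || (j == i.+1).

Definition ipath_from_to (x y : T) (p : seq T) : Prop :=
  ipath x p /\ last x p = y.

Definition hole (c : seq T) : Prop :=
  4 <= size c /\ uniq c /\
  forall x y, x \in c -> y \in c -> e x y = (next c x == y) || (next c y == x).

Definition induces_hole (S : {set T}) : Prop :=
  exists c, hole c /\ [set z in c] = S.

Definition vset (s : seq T) : {set T} := [set z in s].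

Definition triangle (a b c : T) : bool := [&& e a b, e b c & e a c].

Definition has_theta : Prop :=
  exists (a b : T) (p1 p2 p3 : seq T),
    [/\ a != b, ~~ e a b,
        [/\ ipath_from_to a b p1, ipath_from_to a b p2 &
             ipath_from_to a b p3] &
        [/\ vset (a :: p1) :&: vset (a :: p2) = [set a; b],
            vset (a :: p1) :&: vset (a :: p3) = [set a; b],
            vset (a :: p2) :&: vset (a :: p3) = [set a; b] &
          [/\ induces_hole (vset (a :: p1) :|: vset (a :: p2)),
            induces_hole (vset (a :: p1) :|: vset (a :: p3)) &
            induces_hole (vset (a :: p2) :|: vset (a :: p3))]]].

Definition has_pyramid : Prop :=
  exists (a b1 b2 b3 : T) (p1 p2 p3 : seq T),
    [/\ triangle b1 b2 b3,
        ipath_from_to a b1 p1, ipath_from_to a b2 p2, ipath_from_to a b3 p3 &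
        [/\ vset (a :: p1) :&: vset (a :: p2) = [set a],
            vset (a :: p1) :&: vset (a :: p3) = [set a],
            vset (a :: p2) :&: vset (a :: p3) = [set a] &
          [/\ induces_hole (vset (a :: p1) :|: vset (a :: p2)),
            induces_hole (vset (a :: p1) :|: vset (a :: p3)) &
            induces_hole (vset (a :: p2) :|: vset (a :: p3))]]].

Definition has_prism : Prop :=
  exists (a1 a2 a3 b1 b2 b3 : T) (p1 p2 p3 : seq T),
    [/\ triangle a1 a2 a3, triangle b1 b2 b3,
        [disjoint [set a1; a2; a3] & [set b1; b2; b3]],
        [/\ ipath_from_to a1 b1 p1, ipath_from_to a2 b2 p2 &
            ipath_from_to a3 b3 p3] &
        [/\ [disjoint vset (a1 :: p1) & vset (a2 :: p2)],
            [disjoint vset (a1 :: p1) & vset (a3 :: p3)],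
            [disjoint vset (a2 :: p2) & vset (a3 :: p3)] &
          [/\ induces_hole (vset (a1 :: p1) :|: vset (a2 :: p2)),
            induces_hole (vset (a1 :: p1) :|: vset (a3 :: p3)) &
            induces_hole (vset (a2 :: p2) :|: vset (a3 :: p3))]]].

Definition has_turtle : Prop :=
  exists (a1 b1 a2 b2 x y : T) (p1 p2 : seq T),
    [/\ ipath_from_to a1 b1 p1, ipath_from_to a2 b2 p2,
        [/\ [disjoint vset (a1 :: p1) & vset (a2 :: p2)], e a1 a2 & e b1 b2],
        induces_hole (vset (a1 :: p1) :|: vset (a2 :: p2)) &
        [/\ e x y,
            x \notin vset (a1 :: p1) :|: vset (a2 :: p2),
            y \notin vset (a1 :: p1) :|: vset (a2 :: p2),
            (3 <= #|[set z in vset (a1 :: p1) | e x z]|)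
              /\ [set z in vset (a2 :: p2) | e x z] = set0 &
            (3 <= #|[set z in vset (a2 :: p2) | e y z]|)
              /\ [set z in vset (a1 :: p1) | e y z] = set0]].

Definition in_class_C : Prop :=
  ~ has_theta /\ ~ has_pyramid /\ ~ has_prism /\ ~ has_turtle.

Definition nbd (L : {set T}) : {set T} :=
  [set y | (y \notin L) && [exists x in L, e x y]].

Definition component (C L : {set T}) : Prop :=
  [/\ L != set0, [disjoint L & C],
      (forall x y, x \in L -> y \in L ->
         connect [rel u v | [&& u \in L, v \in L & e u v]] x y) &
      (forall x y, x \in L -> y \notin C -> e x y -> y \in L)].

Definition clique (C : {set T}) : Prop :=
  forall x y, x \in C -> y \in C -> x != y -> e x y.

Definition min_sep_full (C L R : {set T}) : Prop :=
  [/\ component C L, component C R, L != R, nbd L = C & nbd R = C].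

Definition proper_sep (C L R : {set T}) : Prop :=
  min_sep_full C L R /\ ~ clique C.

(** The hole H with H_L = c1 :: PL ++ [c2] and H_R = c1 :: PR ++ [c2]:
    as a cyclic sequence H = c1, PL, c2, reverse PR. *)
Definition hole_of (c1 c2 : T) (PL PR : seq T) : seq T :=
  c1 :: PL ++ c2 :: rev PR.

(** (C,c1,c2)-hole, given via the interiors PL = H_L^* and PR = H_R^*. *)
Definition sep_hole (C L R : {set T}) (c1 c2 : T) (PL PR : seq T) : Prop :=
  [/\ hole (hole_of c1 c2 PL PR),
      vset (hole_of c1 c2 PL PR) :&: C = [set c1; c2],
      {subset PL <= L} & {subset PR <= R}].

Definition nbH (H : seq T) (u : T) : {set T} := [set z in H | e u z].

(** u is major for the hole H. Three-vertex subpaths of H are the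
    [take 3 (rot i H)], i < |H|. *)
Definition major (H : seq T) (u : T) : Prop :=
  nbH H u != set0 /\
  forall i, i < size H -> ~~ (nbH H u \subset vset (take 3 (rot i H))).

(** A subpath Q of H of k+1 >= 2
    vertices starts at x with rot i H = x :: s', so Q = x :: take k s',
    y = last x (take k s'), interior = take k.-1 s'; the neighbour of x in
    H \ V(Q) is last x s' and that of y is nth x s' k (when Q misses no
    vertex of H these both fall back inside Q, which is harmless). *)
Definition ext_nbhd (H : seq T) (w : T) (S : {set T}) : Prop :=
  exists (i k : nat) (x : T) (s' : seq T),
    [/\ i < size H /\ rot i H = x :: s', 0 < k <= size s',
        e w x && e w (last x (take k s')),
        (forall z, z \in take k.-1 s' -> ~~ e w z) &
        S = vset (x :: take k s')
            :|: ([set last x s'; nth x s' k] :&: nbH H w)].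

Definition distant (H : seq T) (w a b : T) : Prop :=
  forall S, ext_nbhd H w S -> ~ (a \in S /\ b \in S).

Definition heavy (H : seq T) (c1 c2 v : T) : Prop :=
  major H v /\ distant H v c1 c2.

End Graphs.

(* The argument is purely positional.  Number the vertices of the hole
   H = c1, H_L^*, c2, rev H_R^* by their index in H: c1 sits at 0, c2 at
   q = |H_L^*| + 1, and the hypotheses place a neighbour x of v at a position
   in [2, q-2] and a neighbour y at a position in [q+2, |H|-2].  Reading H
   from its i-th vertex (the sequence rot i H) shifts every position by the
   cyclic offset [cyc_offset].  A three-vertex subpath of H is a window of
   offsets {0,1,2}, which cannot contain both x and y: hence v is major.  An
   extended neighbourhood of v is an arc of offsets [0,k] whose interior
   avoids the neighbours of v, plus possibly the vertices at offsets k+1 and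
   |H|-1; such a set cannot contain both c1 and c2, since one of x, y would
   then lie strictly inside the arc: hence c1, c2 are distant. *)
From mathcomp Require Import all_boot zify.

Set Implicit Arguments.
Unset Strict Implicit.
Unset Printing Implicit Defensive.

(* The offset of position [h] when a cycle of length [n] is read from
   position [i]. *)
Definition cyc_offset (n i h : nat) : nat :=
  if i <= h then h - i else n - i + h.

Section Positions.
Variable T : eqType.

Lemma nth_rot (x0 : T) (s : seq T) i m : i <= size s -> m < size s ->
  nth x0 (rot i s) m =
  nth x0 s (if i + m < size s then i + m else i + m - size s).
Proof.
move=> le_i lt_m; rewrite /rot nth_cat size_drop nth_drop.
case: ifP => in_drop; case: ifP => no_wrap //; try lia.
rewrite nth_take; last lia.
congr nth; lia.
Qed.

Lemma index_rot (s : seq T) i z : uniq s -> i < size s -> z \in s ->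
  index z (rot i s) = cyc_offset (size s) i (index z s).
Proof.
move=> uniq_s lt_i zs; have lt_z : index z s < size s by rewrite index_mem.
have lt_off : cyc_offset (size s) i (index z s) < size s.
  by rewrite /cyc_offset; case: ifP; lia.
have nth_off : nth z (rot i s) (cyc_offset (size s) i (index z s)) = z.
  rewrite nth_rot ?size_rot //; last lia.
  rewrite [X in nth z s X](_ : _ = index z s) ?nth_index //.
  by rewrite /cyc_offset; case: ifP; case: ifP; lia.
by rewrite -{1}nth_off index_uniq ?rot_uniq ?size_rot.
Qed.

Lemma index_interior (s : seq T) z d d' :
  z \in s -> z != head d s -> z != last d' s ->
  0 < index z s < (size s).-1.
Proof.
move=> zs z_head z_last; have lt_z : index z s < size s by rewrite index_mem.
apply/andP; split.
  by case E: (index z s) => //; move: z_head; rewrite -nth0 -E nth_index ?eqxx.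
case: (ltnP (index z s) (size s).-1) => // le_z.
have E : index z s = (size s).-1 by lia.
by move: z_last; rewrite -(nth_last d') -E nth_index ?eqxx.
Qed.

Lemma index_rev (s : seq T) z : uniq s -> z \in s ->
  index z (rev s) = size s - (index z s).+1.
Proof.
move=> uniq_s zs; have lt_z : index z s < size s by rewrite index_mem.
have lt_r : size s - (index z s).+1 < size (rev s) by rewrite size_rev; lia.
rewrite -{1}(nth_index z zs) -(index_uniq z lt_r) ?rev_uniq //.
by rewrite nth_rev ?size_rev; last lia; congr (index (nth _ _ _) _); lia.
Qed.

End Positions.

Lemma index_hole_of (T : finType) (c1 c2 : T) (PL PR : seq T) :
  let H := hole_of c1 c2 PL PR in uniq H ->
  [/\ index c1 H = 0, index c2 H = (size PL).+1,
      {in PL, forall x, index x H = (index x PL).+1} &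
      {in PR, forall y, index y H = size PL + size PR + 1 - index y PR}].
Proof.
rewrite /hole_of /= => /andP [c1_out]; rewrite cat_uniq => /and3P [_ disj].
rewrite /= rev_uniq mem_rev => /andP [c2_PR uniq_PR]; rewrite eqxx.
have c1_ne z : z \in PL ++ c2 :: rev PR -> (c1 == z) = false.
  by move=> zs; apply/eqP=> E; move: c1_out; rewrite E zs.
have out_PL z : z \in c2 :: rev PR -> (z \in PL) = false.
  by move=> zs; apply/negbTE; apply: contra disj => zPL; apply/hasP; exists z.
split=> // [|x xPL|y yPR].
- rewrite c1_ne ?mem_cat ?inE ?eqxx ?orbT // index_cat out_PL ?inE ?eqxx //.
  by rewrite /= eqxx addn0.
- by rewrite c1_ne ?mem_cat ?xPL // index_cat xPL.
have lt_y : index y PR < size PR by rewrite index_mem.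
have c2_ne : (c2 == y) = false.
  by apply/eqP=> E; move: c2_PR; rewrite E yPR.
rewrite c1_ne ?mem_cat ?inE ?mem_rev ?yPR ?orbT //.
have index_y : index y (rev PR) = size PR - (index y PR).+1 by exact: index_rev.
rewrite index_cat out_PL ?inE ?mem_rev ?yPR ?orbT //= c2_ne index_y; lia.
Qed.

Lemma cyc_window_apart n i px py :
  2 <= px -> px + 4 <= py -> py + 2 <= n -> i < n ->
  cyc_offset n i px < 3 -> cyc_offset n i py < 3 -> False.
Proof. rewrite /cyc_offset; case: (leqP i px); case: (leqP i py); lia. Qed.

Lemma cyc_arc_separates n i k q px py :
  2 <= px -> px + 2 <= q -> q + 2 <= py -> py + 2 <= n -> i < n -> k < n ->
  ~ (0 < cyc_offset n i px < k) -> ~ (0 < cyc_offset n i py < k) ->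
  cyc_offset n i 0 <= k.+1 \/ cyc_offset n i 0 = n.-1 ->
  cyc_offset n i q <= k.+1 \/ cyc_offset n i q = n.-1 -> False.
Proof.
rewrite /cyc_offset; case: (leqP i px); case: (leqP i py); case: (leqP i 0);
  case: (leqP i q); lia.
Qed.

Section ExtendedNeighbourhoods.
Variables (T : finType) (e : rel T).

Lemma ext_nbhd_sub (H : seq T) w S : ext_nbhd e H w S ->
  forall z, z \in S -> z \in H.
Proof.
case=> [i [k [x [s' [[_ rotH] _ _ _ ->]]]]] z.
rewrite in_setU in_setI /vset inE => /orP [zQ | /andP [_]].
  rewrite -(mem_rot i) rotH; case/predU1P: zQ => [->|/mem_take zs'].
    exact: mem_head.
  by rewrite inE zs' orbT.
by rewrite inE => /andP [].
Qed.

Lemma ext_nbhd_offsets (H : seq T) w S : uniq H -> ext_nbhd e H w S ->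
  exists i k, [/\ i < size H, k < size H,
    forall z, z \in H -> e w z -> ~ (0 < index z (rot i H) < k) &
    forall z, z \in S ->
      index z (rot i H) <= k.+1 \/ index z (rot i H) = (size H).-1].
Proof.
move=> uniq_H [i [k [x [s' [[lt_i rotH] /andP [k_gt0 le_k] _ no_nb ->]]]]].
have size_s' : size s' = (size H).-1 by rewrite -(size_rot i H) rotH.
have uniq_rot : uniq (rot i H) by rewrite rot_uniq.
have lt_k : k < size H by lia.
exists i, k; split=> //.
  move=> z zH ewz /andP [m_gt0 m_lt]; set m := index z (rot i H) in m_gt0 m_lt.
  have nth_m : nth z s' m.-1 = z.
    rewrite -[s']/(behead (x :: s')) -rotH nth_behead prednK //.
    by rewrite nth_index ?mem_rot.
  have lt_m : m.-1 < k.-1 by lia.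
  have : z \in take k.-1 s'.
    rewrite -nth_m -(nth_take z lt_m) mem_nth // size_takel //.
    exact: leq_trans (leq_pred k) le_k.
  by move/no_nb; rewrite ewz.
move=> z; rewrite in_setU in_setI in_set2.
case/orP=> [zQ | /andP [/orP [] /eqP -> _]].
- left; move: zQ; rewrite /vset in_set.
  rewrite (_ : x :: take k s' = take k.+1 (rot i H)); last by rewrite rotH.
  by rewrite in_take_leq ?size_rot //; move/ltnW.
- right; rewrite (last_nth x) -rotH index_uniq ?size_rot // size_s' ltn_predL.
  exact: leq_ltn_trans (leq0n i) lt_i.
- left; case: (ltnP k (size s')) => lt_ks.
    have nth_k : nth x s' k = nth x (rot i H) k.+1 by rewrite rotH.
    by rewrite nth_k index_uniq // size_rot -(size_rot i H) rotH /= ltnS.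
  by rewrite nth_default // rotH /= eqxx.
Qed.

Lemma heavy_of_far_neighbours (H : seq T) a b w x y :
  uniq H -> x \in H -> y \in H -> e w x -> e w y ->
  index a H = 0 -> 2 <= index x H -> index x H + 2 <= index b H ->
  index b H + 2 <= index y H -> index y H + 2 <= size H ->
  heavy e H a b w.
Proof.
move=> uniq_H xH yH ewx ewy pa px pb py pn.
have x_nb : x \in nbH e H w by rewrite inE xH ewx.
have y_nb : y \in nbH e H w by rewrite inE yH ewy.
split; first split.
- by apply/set0Pn; exists x.
- move=> i lt_i; apply/negP=> /subsetP sub3.
  have offset3 z : z \in nbH e H w -> z \in H ->
      cyc_offset (size H) i (index z H) < 3.
    move=> /sub3 z_window zH; rewrite -index_rot //; apply: index_ltn.
    by move: z_window; rewrite inE.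
  have far_xy : index x H + 4 <= index y H by lia.
  exact: cyc_window_apart px far_xy pn lt_i
    (offset3 _ x_nb xH) (offset3 _ y_nb yH).
move=> S extS [aS bS].
have [i [k [lt_i lt_k no_nb arc]]] := ext_nbhd_offsets uniq_H extS.
have [aH bH] := (ext_nbhd_sub extS aS, ext_nbhd_sub extS bS).
have off_x := no_nb _ xH ewx; have off_y := no_nb _ yH ewy.
have off_a := arc _ aS; have off_b := arc _ bS.
rewrite !index_rot // pa in off_x off_y off_a off_b.
exact: (cyc_arc_separates px pb py pn lt_i lt_k off_x off_y off_a off_b).
Qed.
End ExtendedNeighbourhoods.

Theorem lemma3p3 (T : finType) (e : rel T)
    (e_sym : symmetric e) (e_irr : irreflexive e)
    (HG : in_class_C e)
    (C L R : {set T}) (HCsep : proper_sep e C L R)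
    (c1 c2 : T) (c1C : c1 \in C) (c2C : c2 \in C)
    (PL PR : seq T) (HH : sep_hole e C L R c1 c2 PL PR)
    (v : T) (vH : v \notin hole_of c1 c2 PL PR)
    (vL : exists2 x, x \in PL &
            [&& x != head c2 PL, x != last c1 PL & e v x])
    (vR : exists2 x, x \in PR &
            [&& x != head c2 PR, x != last c1 PR & e v x]) :
  heavy e (hole_of c1 c2 PL PR) c1 c2 v.
Proof.
clear e_sym e_irr HG HCsep c1C c2C vH.
case: HH => [[_ [uniq_H _]] _ _ _].
have [pc1 pc2 pPL pPR] := index_hole_of uniq_H.
have size_H : size (hole_of c1 c2 PL PR) = size PL + size PR + 2.
  by rewrite /hole_of /= size_cat /= size_rev; lia.
case: vL => x xPL /and3P [x_head x_last evx].
case: vR => y yPR /and3P [y_head y_last evy].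
have /andP [x_lo x_hi] : 0 < index x PL < (size PL).-1.
  exact: index_interior xPL x_head x_last.
have /andP [y_lo y_hi] : 0 < index y PR < (size PR).-1.
  exact: index_interior yPR y_head y_last.
apply: (heavy_of_far_neighbours (x := x) (y := y)) => //.
- by rewrite /hole_of inE mem_cat xPL orbT.
- by rewrite /hole_of inE mem_cat inE mem_rev yPR !orbT.
all: rewrite ?(pPL x xPL) ?(pPR y yPR) ?pc2 ?size_H; lia.
Qed.
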